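(* Let $H=\bigcup_{j=1}^n(c_j,d_j)\subset\mathbb R$ with the closed intervals $[c_j,d_j]$ pairwise disjoint, let $\mathcal B$ be a finite index set and $m\ge1$. Assume: for each $\beta\in\mathcal B$, $b_\beta,\theta_\beta\in C^m(\bar H)$, $b_\beta(x)>0$ for all $x\in\bar H$, $\theta_\beta(H)\subset H$; and there exist an integer $\mu\ge1$ and $\kappa<1$ with $|\theta_\omega(x)-\theta_\omega(y)|\le\kappa|x-y|$ for all $\omega\in\mathcal B_\mu$ and $x,y\in\bar H$. For $s>0$ let $L_s$ be $(L_sf)(x)=\sum_{\beta\in\mathcal B}[b_\beta(x)]^sf(\theta_\beta(x))$, and let $v_s$ be its strictly positive $C^m$ eigenvector with eigenvalue $r(L_s)$. Let $\epsilon_0=1$ and for $\nu\ge1$ $$\epsilon_\nu=\sup\Big\{\frac{|\theta_\omega(x)-\theta_\omega(y)|}{|x-y|}:\omega\in\mathcal B_\nu,\ x,y\in H,\ x\ne y\Big\},$$ and $C_1=\sup\{|Db_\beta(x)|/b_\beta(x):\beta\in\mathcal B,x\in H\}$. Then for $s>0$, $$\sup\Big\{\frac{|Dv_s(x)|}{v_s(x)}:x\in\bar H\Big\}\le C_1s\sum_{\nu=0}^\infty\epsilon_\nu.$$ Moreover, if $\delta\in\{0,1\}$ and $(-1)^\delta Db_\omega(x)/b_\omega(x)\le0$ for all $\omega\in\mathcal B_\nu$, all $\nu\ge1$ and all $x\in\bar H$, then $(-1)^\delta Dv_s(x)\le0$ for all $x\in\bar H$ and all $s>0$.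
   Context: $D=d/dx$. $C^m(\bar H)$ denotes real $C^m$ functions on $H$ whose derivatives of order $\le m$ extend continuously to $\bar H$. $\mathcal B_\nu=\{(j_1,\ldots,j_\nu):j_k\in\mathcal B\}$; for $\omega=(j_1,\ldots,j_\nu)$, $\theta_\omega=\theta_{j_\nu}\circ\cdots\circ\theta_{j_1}$ and $b_\omega(x)=b_{j_\nu}(\theta_{(j_1,\ldots,j_{\nu-1})}(x))\cdots b_{j_2}(\theta_{j_1}(x))\,b_{j_1}(x)$. Under these hypotheses, $L_s$ acting on $C^m(\bar H)$ has a strictly positive $C^m$ eigenvector $v_s$, unique up to positive multiples, with eigenvalue $r(L_s)>0$, and $\sum_\nu\epsilon_\nu<\infty$. *)

From Stdlib Require Import Reals Lra List.
From Coquelicot Require Export Coquelicot.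
Import ListNotations.
Open Scope R_scope.

Definition Hset (n : nat) (c d : nat -> R) (x : R) : Prop :=
  exists j, (j < n)%nat /\ c j < x /\ x < d j.
Definition barHset (n : nat) (c d : nat -> R) (x : R) : Prop :=
  exists j, (j < n)%nat /\ c j <= x /\ x <= d j.

Definition cont_on (S : R -> Prop) (g : R -> R) : Prop :=
  forall x, S x -> filterlim g (within S (locally x)) (locally (g x)).

(* f in C^m(bar H): the derivatives of order <= m on H exist and extend
   continuously to bar H (F k is the continuous extension of the k-th
   derivative; F 0 agrees with f on bar H). *)
Definition Cm_bar (n : nat) (c d : nat -> R) (m : nat) (f : R -> R) : Prop :=
  exists F : nat -> R -> R,
    (forall x, barHset n c d x -> F O x = f x) /\
    (forall k, (k <= m)%nat -> cont_on (barHset n c d) (F k)) /\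
    (forall k x, (k < m)%nat -> Hset n c d x -> is_derive (F k) x (F (Nat.succ k) x)).

Definition Dext (n : nat) (c d : nat -> R) (f g : R -> R) : Prop :=
  cont_on (barHset n c d) g /\ (forall x, Hset n c d x -> is_derive f x (g x)).

(* words omega = (j_1,...,j_nu) in B_nu, with B = {0,...,N-1} *)
Definition word (N nu : nat) (w : list nat) : Prop :=
  length w = nu /\ List.Forall (fun j => (j < N)%nat) w.

(* theta_omega = theta_{j_nu} o ... o theta_{j_1} *)
Definition theta_w (th : nat -> R -> R) (w : list nat) (x : R) : R :=
  fold_left (fun y j => th j y) w x.

(* b_omega(x) = b_{j_nu}(theta_{(j_1..j_{nu-1})} x) ... b_{j_2}(theta_{j_1} x) b_{j_1}(x) *)
Fixpoint b_w (b th : nat -> R -> R) (w : list nat) (x : R) : R :=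
  match w with
  | [] => 1
  | j :: w' => b j x * b_w b th w' (th j x)
  end.

Definition sumB (N : nat) (F : nat -> R) : R :=
  fold_right Rplus 0 (map F (seq 0 N)).

Definition Ls (N : nat) (b th : nat -> R -> R) (s : R) (f : R -> R) (x : R) : R :=
  sumB N (fun beta => Rpower (b beta x) s * f (th beta x)).

(* epsilon_0 = 1, epsilon_nu = sup of Lipschitz quotients of theta_omega on H
   (the sups are finite under the hypotheses; sup of an empty set read as 0) *)
Definition eps_nu (n : nat) (c d : nat -> R) (N : nat) (th : nat -> R -> R) (nu : nat) : R :=
  match nu with
  | O => 1
  | Datatypes.S _ => real (Lub_Rbar (fun r => exists w x y, word N nu w /\
             Hset n c d x /\ Hset n c d y /\ x <> y /\
             r = Rabs (theta_w th w x - theta_w th w y) / Rabs (x - y)))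
  end.

Definition C1const (n : nat) (c d : nat -> R) (N : nat) (b : nat -> R -> R) : R :=
  real (Lub_Rbar (fun r => exists beta x, (beta < N)%nat /\ Hset n c d x /\
           r = Rabs (Derive (b beta) x) / b beta x)).

(* sum_{nu=0}^infty epsilon_nu, as an extended real (limit of increasing partial sums) *)
Definition sum_eps (n : nat) (c d : nat -> R) (N : nat) (th : nat -> R -> R) : Rbar :=
  Lim_seq (sum_n (eps_nu n c d N th)).

(* Iterating the eigenvalue equation k times gives
     lam^k v(x) = sum_{|w| = k} b_w(x)^s v(theta_w x),
   and differentiating it,
     lam^k Dv(x) = sum_{|w| = k} b_w(x)^s [s (Db_w/b_w)(x) v(theta_w x) + theta_w'(x) Dv(theta_w x)].
   By the chain rule |Db_w/b_w| <= C_1 (eps_0 + ... + eps_{k-1}) and |theta_w'| <= eps_k, and by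
   compactness |Dv| <= K v on the closure of H.  Dividing by lam^k v(x) gives
     |Dv(x)| / v(x) <= s C_1 (eps_0 + ... + eps_{k-1}) + K eps_k.
   The eps_nu are submultiplicative with eps_mu <= kappa < 1, so they decay geometrically and
   k -> oo yields the bound.  Under the sign hypothesis all first terms have the sign opposite to
   (-1)^delta, which leaves (-1)^delta Dv(x) <= K eps_k v(x) -> 0. *)

From Stdlib Require Import Reals List Lra Lia IndefiniteDescription Classical_Prop.
From Coquelicot Require Import Coquelicot.
Import ListNotations.
Open Scope R_scope.

Lemma ex_pos_forall_lt (n : nat) (P : nat -> R -> Prop) :
  (forall i g g', 0 < g' -> g' <= g -> P i g -> P i g') ->
  (forall i, (i < n)%nat -> exists g, 0 < g /\ P i g) ->
  exists g, 0 < g /\ forall i, (i < n)%nat -> P i g.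
Proof.
  intros Hmono. induction n as [|n IH]; intros H.
  - exists 1; split; [lra | intros; lia].
  - destruct IH as [g1 [Hg1 H1]]; [intros i Hi; apply H; lia |].
    destruct (H n) as [g2 [Hg2 H2]]; [lia |].
    assert (Hmin : 0 < Rmin g1 g2) by (apply Rmin_pos; auto).
    exists (Rmin g1 g2); split; [exact Hmin |].
    intros i Hi. destruct (Nat.eq_dec i n) as [-> | Hne].
    + exact (Hmono n g2 _ Hmin (Rmin_r _ _) H2).
    + exact (Hmono i g1 _ Hmin (Rmin_l _ _) (H1 i ltac:(lia))).
Qed.

Lemma ex_ub_forall_lt (n : nat) (P : nat -> R -> Prop) :
  (forall i g g', g <= g' -> P i g -> P i g') ->
  (forall i, (i < n)%nat -> exists g, P i g) ->
  exists g, forall i, (i < n)%nat -> P i g.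
Proof.
  intros Hmono. induction n as [|n IH]; intros H.
  - exists 0; intros; lia.
  - destruct IH as [g1 H1]; [intros i Hi; apply H; lia |].
    destruct (H n) as [g2 H2]; [lia |].
    exists (Rmax g1 g2). intros i Hi. destruct (Nat.eq_dec i n) as [-> | Hne].
    + exact (Hmono n g2 _ (Rmax_r _ _) H2).
    + exact (Hmono i g1 _ (Rmax_l _ _) (H1 i ltac:(lia))).
Qed.

Lemma choice_lt {A : Type} (N : nat) (a0 : A) (P : nat -> A -> Prop) :
  (forall j, (j < N)%nat -> exists a, P j a) ->
  exists f : nat -> A, forall j, (j < N)%nat -> P j (f j).
Proof.
  intros H.
  exists (fun j => match Compare_dec.lt_dec j N with
                   | left Hj => proj1_sig (constructive_indefinite_description _ (H j Hj))
                   | right _ => a0 end).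
  intros j Hj. destruct (Compare_dec.lt_dec j N) as [Hj' | Hj']; [apply proj2_sig | contradiction].
Qed.

(** * The open set H and its closure *)

Section Intervals.
Variables (n : nat) (c d : nat -> R).
Notation HH := (Hset n c d).
Notation BH := (barHset n c d).

Lemma Hset_barHset x : HH x -> BH x.
Proof. intros [j [Hj Hx]]. exists j; split; [exact Hj | lra]. Qed.

Lemma Hset_locally x : HH x -> locally x HH.
Proof.
  intros [j [Hj Hx]].
  assert (He : 0 < Rmin (x - c j) (d j - x)) by (apply Rmin_pos; lra).
  exists (mkposreal _ He). intros y Hy.
  change (Rabs (y - x) < Rmin (x - c j) (d j - x)) in Hy. apply Rabs_def2 in Hy.
  pose proof (Rmin_l (x - c j) (d j - x)). pose proof (Rmin_r (x - c j) (d j - x)).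
  exists j; split; [exact Hj | lra].
Qed.

Lemma barHset_bounded : exists B, forall x, BH x -> Rabs x <= B.
Proof.
  destruct (ex_ub_forall_lt n (fun j B => forall x, c j <= x <= d j -> Rabs x <= B))
    as [B HB].
  - intros i g g' Hg H x Hx. specialize (H x Hx). lra.
  - intros i _. exists (Rabs (c i) + Rabs (d i)). intros x Hx.
    unfold Rabs; repeat destruct Rcase_abs; lra.
  - exists B. intros x [j [Hj Hx]]. exact (HB j Hj x Hx).
Qed.

Lemma not_barHset_locally x : ~ BH x ->
  exists r, 0 < r /\ forall y, Rabs (y - x) < r -> ~ BH y.
Proof.
  intros Hx.
  destruct (ex_pos_forall_lt n (fun j r => forall y, Rabs (y - x) < r -> ~ (c j <= y <= d j)))
    as [r [Hr H]].
  - intros i g g' _ Hg H y Hy. apply H; lra.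
  - intros j Hj. destruct (Rlt_dec x (c j)) as [Hl | Hl].
    + exists (c j - x); split; [lra |]. intros y Hy. apply Rabs_def2 in Hy. lra.
    + destruct (Rlt_dec (d j) x) as [Hr | Hr].
      * exists (x - d j); split; [lra |]. intros y Hy. apply Rabs_def2 in Hy. lra.
      * exfalso. apply Hx. exists j; split; [exact Hj | lra].
  - exists r; split; [exact Hr |]. intros y Hy [j [Hj Hyj]]. exact (H j Hj y Hy Hyj).
Qed.

Hypothesis Hcd : forall j, (j < n)%nat -> c j < d j.

Lemma barHset_dense x : BH x -> forall e, 0 < e -> exists y, HH y /\ Rabs (y - x) < e.
Proof.
  intros [j [Hj Hx]] e He. pose proof (Hcd j Hj).
  destruct (Rlt_dec x (d j)) as [Hl | Hl].
  - pose proof (Rmin_l e (d j - x)). pose proof (Rmin_r e (d j - x)).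
    assert (0 < Rmin e (d j - x)) by (apply Rmin_pos; lra).
    exists (x + Rmin e (d j - x) / 2). split; [exists j; split; [exact Hj | lra] |].
    rewrite Rabs_right; lra.
  - pose proof (Rmin_l e (d j - c j)). pose proof (Rmin_r e (d j - c j)).
    assert (0 < Rmin e (d j - c j)) by (apply Rmin_pos; lra).
    exists (x - Rmin e (d j - c j) / 2). split; [exists j; split; [exact Hj | lra] |].
    rewrite Rabs_left; lra.
Qed.

Hypothesis Hdisj : forall i j, (i < n)%nat -> (j < n)%nat -> i <> j -> d i < c j \/ d j < c i.

(* Distinct components are a positive distance apart because their closures are disjoint. *)
Lemma Hset_close_same_component : exists g, 0 < g /\ forall x y, HH x -> HH y ->
  Rabs (x - y) < g -> exists j, (j < n)%nat /\ c j < x < d j /\ c j < y < d j.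
Proof.
  destruct (ex_pos_forall_lt n (fun i g => forall l x y, (l < n)%nat -> i <> l ->
     c i < x < d i -> c l < y < d l -> g <= Rabs (x - y))) as [g [Hg Hgap]].
  - intros i g g' _ Hle H l x y Hl Hne Hx Hy. specialize (H l x y Hl Hne Hx Hy). lra.
  - intros i Hi.
    destruct (ex_pos_forall_lt n (fun l g => forall x y, i <> l ->
       c i < x < d i -> c l < y < d l -> g <= Rabs (x - y))) as [g [Hg H]].
    + intros l g g' _ Hle H x y Hne Hx Hy. specialize (H x y Hne Hx Hy). lra.
    + intros l Hl. destruct (Nat.eq_dec i l) as [-> | Hne].
      * exists 1; split; [lra | intros; congruence].
      * destruct (Hdisj i l Hi Hl Hne) as [Ho | Ho].
        -- exists (c l - d i); split; [lra |]. intros x y _ Hx Hy. rewrite Rabs_left; lra.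
        -- exists (c i - d l); split; [lra |]. intros x y _ Hx Hy. rewrite Rabs_right; lra.
    + exists g; split; [exact Hg |]. intros l x y Hl Hne. exact (H l Hl x y Hne).
  - exists g; split; [exact Hg |]. intros x y [i [Hi Hx]] [l [Hl Hy]] Hxy.
    destruct (Nat.eq_dec i l) as [<- | Hne].
    + exists i; auto.
    + specialize (Hgap i Hi l x y Hl Hne Hx Hy). lra.
Qed.

End Intervals.

Section ContOn.
Variable S : R -> Prop.

Lemma cont_on_const a : cont_on S (fun _ => a).
Proof. intros x _. apply filterlim_const. Qed.

Lemma cont_on_plus f g : cont_on S f -> cont_on S g -> cont_on S (fun x => f x + g x).
Proof.
  intros Hf Hg x Sx. eapply filterlim_comp_2; [apply Hf, Sx | apply Hg, Sx |].
  apply (filterlim_plus (V := R_NormedModule)).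
Qed.

Lemma cont_on_mult f g : cont_on S f -> cont_on S g -> cont_on S (fun x => f x * g x).
Proof.
  intros Hf Hg x Sx. eapply filterlim_comp_2; [apply Hf, Sx | apply Hg, Sx |].
  apply (filterlim_mult (K := R_AbsRing)).
Qed.

Lemma cont_on_abs f : cont_on S f -> cont_on S (fun x => Rabs (f x)).
Proof. intros Hf x Sx. eapply filterlim_comp; [apply Hf, Sx | apply (filterlim_Rabs (Finite (f x)))]. Qed.

Lemma cont_on_inv f : cont_on S f -> (forall x, S x -> f x <> 0) -> cont_on S (fun x => / f x).
Proof.
  intros Hf Hnz x Sx. eapply filterlim_comp; [apply Hf, Sx |].
  apply (filterlim_Rbar_inv (Finite (f x))). intros Heq. injection Heq. apply Hnz, Sx.
Qed.

Lemma cont_on_ext f g : cont_on S f -> (forall x, S x -> f x = g x) -> cont_on S g.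
Proof.
  intros Hf Hfg x Sx. rewrite <- (Hfg x Sx).
  apply filterlim_ext_loc with f; [| apply Hf, Sx].
  exists (mkposreal 1 Rlt_0_1). intros y _ Sy. apply Hfg, Sy.
Qed.

Lemma cont_on_comp f g : cont_on S f -> cont_on S g -> (forall x, S x -> S (g x)) ->
  cont_on S (fun x => f (g x)).
Proof.
  intros Hf Hg HS x Sx. eapply filterlim_comp; [| apply Hf, HS, Sx].
  intros P [eps Heps]. destruct (proj1 (filterlim_locally _ _) (Hg x Sx) eps) as [e He].
  exists e. intros y Hy Sy. apply Heps; [apply He; auto | apply HS, Sy].
Qed.

Lemma cont_on_eps f x : cont_on S f -> S x -> forall e, 0 < e ->
  exists dl, 0 < dl /\ forall y, S y -> Rabs (y - x) < dl -> Rabs (f y - f x) < e.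
Proof.
  intros Hf Sx e He.
  destruct (proj1 (filterlim_locally _ _) (Hf x Sx) (mkposreal e He)) as [dl Hdl].
  exists dl; split; [apply cond_pos |]. intros y Sy Hy. exact (Hdl y Hy Sy).
Qed.

End ContOn.

Definition clamp (a b x : R) : R := Rmax a (Rmin b x).

Lemma clamp_lipschitz a b x y : Rabs (clamp a b y - clamp a b x) <= Rabs (y - x).
Proof.
  unfold clamp, Rmax, Rmin. repeat destruct Rle_dec; unfold Rabs; repeat destruct Rcase_abs; lra.
Qed.

Lemma clamp_between a b x : a <= b -> a <= clamp a b x <= b.
Proof. intros Hab. unfold clamp, Rmax, Rmin. repeat destruct Rle_dec; lra. Qed.

Lemma clamp_id a b x : a <= x <= b -> clamp a b x = x.
Proof. intros Hx. unfold clamp, Rmax, Rmin. repeat destruct Rle_dec; lra. Qed.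

Section ContOnClosure.
Variables (n : nat) (c d : nat -> R).
Hypothesis Hcd : forall j, (j < n)%nat -> c j < d j.
Notation HH := (Hset n c d).
Notation BH := (barHset n c d).

Lemma cont_on_barHset_le_0 f : cont_on BH f -> (forall y, HH y -> f y <= 0) ->
  forall x, BH x -> f x <= 0.
Proof.
  intros Hf Hle x Hx. apply Rnot_lt_le. intros Hpos.
  destruct (cont_on_eps _ _ _ Hf Hx (f x) Hpos) as [dl [Hdl H]].
  destruct (barHset_dense n c d Hcd x Hx dl Hdl) as [y [Hy Hyx]].
  specialize (H y (Hset_barHset n c d y Hy) Hyx). specialize (Hle y Hy).
  apply Rabs_def2 in H. lra.
Qed.

Lemma cont_on_barHset_maps f : cont_on BH f -> (forall y, HH y -> HH (f y)) ->
  forall x, BH x -> BH (f x).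
Proof.
  intros Hf HfH x Hx. apply NNPP. intros Hn.
  destruct (not_barHset_locally n c d (f x) Hn) as [r [Hr Hout]].
  destruct (cont_on_eps _ _ _ Hf Hx r Hr) as [dl [Hdl H]].
  destruct (barHset_dense n c d Hcd x Hx dl Hdl) as [y [Hy Hyx]].
  apply (Hout (f y) (H y (Hset_barHset n c d y Hy) Hyx)).
  apply Hset_barHset, HfH, Hy.
Qed.

(* Each [c j, d j] is compact; [clamp] extends f from it to a function continuous on all of R. *)
Lemma cont_on_barHset_bounded f : cont_on BH f -> exists K, forall x, BH x -> Rabs (f x) <= K.
Proof.
  intros Hf.
  destruct (ex_ub_forall_lt n (fun j K => forall x, c j <= x <= d j -> Rabs (f x) <= K))
    as [K HK].
  - intros i g g' Hle H x Hx. specialize (H x Hx). lra.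
  - intros j Hj. pose proof (Hcd j Hj).
    assert (Hin : forall z, BH (clamp (c j) (d j) z)).
    { intros z. exists j; split; [exact Hj | apply clamp_between; lra]. }
    destruct (bounded_continuity (fun z => f (clamp (c j) (d j) z)) (c j) (d j)) as [M HM].
    + intros x _. eapply filterlim_comp; [| apply Hf, Hin].
      intros P [eps Heps]. exists eps. intros y Hy. apply Heps; [| apply Hin].
      eapply Rle_lt_trans; [apply clamp_lipschitz | exact Hy].
    + exists M. intros x Hx. specialize (HM x Hx). rewrite clamp_id in HM by exact Hx. apply Rlt_le, HM.
  - exists K. intros x [j [Hj Hx]]. exact (HK j Hj x Hx).
Qed.

End ContOnClosure.

(** * The constants eps_nu *)

Lemma real_Lub_Rbar_le (E : R -> Prop) B :
  (forall r, E r -> r <= B) -> 0 <= B -> real (Lub_Rbar E) <= B.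
Proof.
  intros HE HB. destruct (Lub_Rbar_correct E) as [_ Hlub].
  specialize (Hlub (Finite B) HE). destruct (Lub_Rbar E); simpl in *; auto; contradiction.
Qed.

Lemma le_real_Lub_Rbar (E : R -> Prop) B r :
  (forall r, E r -> r <= B) -> E r -> r <= real (Lub_Rbar E).
Proof.
  intros HE Hr. destruct (Lub_Rbar_correct E) as [Hub Hlub].
  specialize (Hlub (Finite B) HE). specialize (Hub r Hr).
  destruct (Lub_Rbar E); simpl in *; auto; contradiction.
Qed.

(* An empty set has supremum -oo, whose [real] part is 0. *)
Lemma real_Lub_Rbar_nonneg (E : R -> Prop) : (forall r, E r -> 0 <= r) -> 0 <= real (Lub_Rbar E).
Proof.
  intros HE. destruct (Lub_Rbar_correct E) as [Hub Hlub].
  destruct (Lub_Rbar E) eqn:HL; simpl; try lra.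
  destruct (classic (exists x, E x)) as [[x Hx] | Hempty].
  - specialize (Hub x Hx). specialize (HE x Hx). simpl in Hub. lra.
  - specialize (Hlub m_infty (fun x Hx => False_ind _ (Hempty (ex_intro _ x Hx)))).
    contradiction.
Qed.

Lemma word_cons N k j w : (j < N)%nat -> word N k w -> word N (S k) (j :: w).
Proof. intros Hj [Hl Hf]. split; simpl; auto. Qed.

Lemma word_cons_inv N k j w : word N k (j :: w) -> (j < N)%nat /\ word N (pred k) w.
Proof. intros [Hl Hf]. inversion Hf; subst. split; [assumption | split; auto]. Qed.

Lemma word_add_split N a b w : word N (a + b) w ->
  exists w1 w2, w = w1 ++ w2 /\ word N a w1 /\ word N b w2.
Proof.
  intros [Hl Hf]. exists (firstn a w), (skipn a w). split; [symmetry; apply firstn_skipn |].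
  rewrite <- (firstn_skipn a w) in Hf. apply Forall_app in Hf as [H1 H2].
  split; split; auto; [rewrite length_firstn | rewrite length_skipn]; lia.
Qed.

Lemma theta_w_app th w1 w2 x : theta_w th (w1 ++ w2) x = theta_w th w2 (theta_w th w1 x).
Proof. apply fold_left_app. Qed.

Definition slope_set (n : nat) (c d : nat -> R) (N : nat) (th : nat -> R -> R) (nu : nat)
  (r : R) : Prop :=
  exists w x y, word N nu w /\ Hset n c d x /\ Hset n c d y /\ x <> y /\
    r = Rabs (theta_w th w x - theta_w th w y) / Rabs (x - y).

Lemma eps_nu_S n c d N th k :
  eps_nu n c d N th (S k) = real (Lub_Rbar (slope_set n c d N th (S k))).
Proof. reflexivity. Qed.

Lemma slope_le a b r : 0 < Rabs b -> Rabs a <= r * Rabs b -> Rabs a / Rabs b <= r.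
Proof.
  intros Hb H. apply Rmult_le_reg_r with (Rabs b); [exact Hb |].
  unfold Rdiv. rewrite Rmult_assoc, Rinv_l by lra. lra.
Qed.

Lemma ex_root_lt_1 q k : 0 < q < 1 -> (1 <= k)%nat -> exists rho, 0 < rho < 1 /\ rho ^ k = q.
Proof.
  intros Hq Hk. assert (Hk0 : 0 < INR k) by (apply lt_0_INR; lia).
  exists (Rpower q (/ INR k)). split; [split |].
  - apply exp_pos.
  - unfold Rpower. rewrite <- exp_0. apply exp_increasing.
    assert (ln q < 0) by (rewrite <- ln_1; apply ln_increasing; lra).
    assert (0 < / INR k) by (apply Rinv_0_lt_compat; lra). nra.
  - rewrite <- Rpower_pow by apply exp_pos.
    rewrite Rpower_mult, Rinv_l by lra. apply Rpower_1; lra.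
Qed.

Section Eps.
Variables (n : nat) (c d : nat -> R) (N : nat) (th : nat -> R -> R).
Notation HH := (Hset n c d).
Notation eps := (eps_nu n c d N th).
Notation slopes := (slope_set n c d N th).
Hypothesis Hth_H : forall j x, (j < N)%nat -> HH x -> HH (th j x).

Lemma theta_w_Hset w : forall k x, word N k w -> HH x -> HH (theta_w th w x).
Proof.
  induction w as [|j w IH]; intros k x Hw Hx; [exact Hx |].
  apply word_cons_inv in Hw as [Hj Hw]. exact (IH _ (th j x) Hw (Hth_H j x Hj Hx)).
Qed.

Lemma slope_set_nonneg k r : slopes k r -> 0 <= r.
Proof.
  intros [w [x [y [_ [_ [_ [Hne ->]]]]]]].
  apply Rle_mult_inv_pos; [apply Rabs_pos | apply Rabs_pos_lt; lra].
Qed.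

Lemma eps_nu_nonneg k : 0 <= eps k.
Proof.
  destruct k as [|k]; [simpl; lra |].
  rewrite eps_nu_S. apply real_Lub_Rbar_nonneg, slope_set_nonneg.
Qed.

Lemma eps_nu_le k B : (forall r, slopes (S k) r -> r <= B) -> 0 <= B -> eps (S k) <= B.
Proof. intros. rewrite eps_nu_S. apply real_Lub_Rbar_le; assumption. Qed.

Hypothesis Hth_lip : exists L, 0 <= L /\ forall j x y, (j < N)%nat -> HH x -> HH y ->
  Rabs (th j x - th j y) <= L * Rabs (x - y).

Lemma slope_set_bounded k : exists B, forall r, slopes k r -> r <= B.
Proof.
  destruct Hth_lip as [L [HL0 HL]].
  assert (Hlip : forall w k x y, word N k w -> HH x -> HH y ->
            Rabs (theta_w th w x - theta_w th w y) <= L ^ k * Rabs (x - y)).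
  { induction w as [|j w IH]; intros k' x y Hw Hx Hy.
    - destruct Hw as [Hl _]. simpl in Hl. subst k'. simpl. lra.
    - destruct k' as [|k']; [destruct Hw as [Hl _]; discriminate |].
      apply word_cons_inv in Hw as [Hj Hw]. simpl in Hw |- *.
      eapply Rle_trans; [exact (IH _ _ _ Hw (Hth_H j x Hj Hx) (Hth_H j y Hj Hy)) |].
      replace (L * L ^ k' * Rabs (x - y)) with (L ^ k' * (L * Rabs (x - y))) by ring.
      apply Rmult_le_compat_l; [apply pow_le; exact HL0 | apply HL; auto]. }
  exists (L ^ k). intros r [w [x [y [Hw [Hx [Hy [Hne ->]]]]]]].
  apply slope_le; [apply Rabs_pos_lt; lra | exact (Hlip w k x y Hw Hx Hy)].
Qed.

Lemma le_eps_nu k r : slopes (S k) r -> r <= eps (S k).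
Proof.
  intros Hr. destruct (slope_set_bounded (S k)) as [B HB].
  rewrite eps_nu_S. exact (le_real_Lub_Rbar _ B r HB Hr).
Qed.

Lemma eps_nu_submult a b : eps (a + b) <= eps a * eps b.
Proof.
  destruct a as [|a]; [simpl; lra |]. destruct b as [|b]; [rewrite Nat.add_0_r; simpl; lra |].
  replace (S a + S b)%nat with (S (a + S b)) by lia.
  apply eps_nu_le; [| apply Rmult_le_pos; apply eps_nu_nonneg].
  intros r [w [x [y [Hw [Hx [Hy [Hne ->]]]]]]].
  replace (S (a + S b)) with (S a + S b)%nat in Hw by lia.
  destruct (word_add_split _ _ _ _ Hw) as [w1 [w2 [-> [Hw1 Hw2]]]].
  rewrite !theta_w_app.
  set (u := theta_w th w1 x). set (u' := theta_w th w1 y).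
  assert (Hu : HH u) by exact (theta_w_Hset _ _ _ Hw1 Hx).
  assert (Hu' : HH u') by exact (theta_w_Hset _ _ _ Hw1 Hy).
  assert (Hxy : 0 < Rabs (x - y)) by (apply Rabs_pos_lt; lra).
  destruct (Req_dec u u') as [Heq | Hne'].
  - rewrite Heq, Rminus_diag, Rabs_R0, Rdiv_0_l. apply Rmult_le_pos; apply eps_nu_nonneg.
  - assert (Huu : 0 < Rabs (u - u')) by (apply Rabs_pos_lt; lra).
    assert (H1 : Rabs (u - u') / Rabs (x - y) <= eps (S a))
      by (apply le_eps_nu; exists w1, x, y; auto 10).
    assert (H2 : Rabs (theta_w th w2 u - theta_w th w2 u') / Rabs (u - u') <= eps (S b))
      by (apply le_eps_nu; exists w2, u, u'; auto 10).
    replace (Rabs (theta_w th w2 u - theta_w th w2 u') / Rabs (x - y)) with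
      (Rabs (u - u') / Rabs (x - y) * (Rabs (theta_w th w2 u - theta_w th w2 u') / Rabs (u - u')))
      by (field; lra).
    apply Rmult_le_compat; try assumption;
      apply Rle_mult_inv_pos; auto; apply Rabs_pos.
Qed.

Variables (mu : nat) (kappa : R).
Hypothesis Hmu : (1 <= mu)%nat.
Hypothesis Hkappa : kappa < 1.
Hypothesis Hcontr : forall w x y, word N mu w -> barHset n c d x -> barHset n c d y ->
  Rabs (theta_w th w x - theta_w th w y) <= kappa * Rabs (x - y).

(* [q] must be positive for the [mu]-th root taken in [eps_nu_geometric]. *)
Lemma eps_nu_mu_lt_1 : exists q, 0 < q < 1 /\ eps mu <= q.
Proof.
  exists ((1 + Rmax kappa 0) / 2).
  pose proof (Rmax_l kappa 0). pose proof (Rmax_r kappa 0).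
  assert (Rmax kappa 0 < 1) by (unfold Rmax; destruct Rle_dec; lra).
  split; [lra |]. destruct mu as [|k]; [lia |].
  apply eps_nu_le; [| lra]. intros r [w [x [y [Hw [Hx [Hy [Hne ->]]]]]]].
  apply Rle_trans with (Rmax kappa 0); [| lra].
  apply slope_le; [apply Rabs_pos_lt; lra |].
  eapply Rle_trans; [apply Hcontr; auto; apply Hset_barHset; assumption |].
  apply Rmult_le_compat_r; [apply Rabs_pos | assumption].
Qed.

Lemma eps_nu_mu_mul_add q p r : eps mu <= q -> eps (mu * p + r) <= q ^ p * eps r.
Proof.
  intros Hq. induction p as [|p IH]; [rewrite Nat.mul_0_r; simpl; lra |].
  replace (mu * S p + r)%nat with (mu + (mu * p + r))%nat by lia.
  eapply Rle_trans; [apply eps_nu_submult |]. simpl. rewrite Rmult_assoc.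
  apply Rmult_le_compat; auto; apply eps_nu_nonneg.
Qed.

Lemma eps_nu_geometric : exists C rho, 0 < rho < 1 /\ forall k, eps k <= C * rho ^ k.
Proof.
  destruct eps_nu_mu_lt_1 as [q [Hq Hmuq]].
  destruct (ex_root_lt_1 q mu Hq Hmu) as [rho [Hrho Hrho_mu]].
  destruct (ex_ub_forall_lt mu (fun r B => eps r <= B)) as [E0 HE0];
    [intros; lra | intros i _; exists (eps i); lra |].
  exists (E0 / q), rho. split; [exact Hrho |]. intros k.
  rewrite (Nat.div_mod k mu ltac:(lia)).
  set (p := (k / mu)%nat). set (r := (k mod mu)%nat).
  assert (Hr : (r < mu)%nat) by (apply Nat.mod_upper_bound; lia).
  assert (HE0r : eps r <= E0) by exact (HE0 r Hr).
  assert (Hqr : q <= rho ^ r).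
  { rewrite <- Hrho_mu. replace mu with (r + (mu - r))%nat at 1 by lia.
    rewrite pow_add. rewrite <- (Rmult_1_r (rho ^ r)) at 2.
    apply Rmult_le_compat_l; [apply pow_le; lra |].
    rewrite <- (pow1 (mu - r)). apply pow_incr; lra. }
  assert (0 <= q ^ p) by (apply pow_le; lra).
  pose proof (eps_nu_nonneg r).
  eapply Rle_trans; [apply (eps_nu_mu_mul_add q p r Hmuq) |].
  rewrite pow_add, pow_mult, Hrho_mu.
  apply Rle_trans with (q ^ p * E0); [apply Rmult_le_compat_l; assumption |].
  replace (E0 / q * (q ^ p * rho ^ r)) with (q ^ p * E0 * (rho ^ r / q)) by (field; lra).
  rewrite <- (Rmult_1_r (q ^ p * E0)) at 1. apply Rmult_le_compat_l; [nra |].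
  apply Rmult_le_reg_r with q; [lra |]. unfold Rdiv. rewrite Rmult_assoc, Rinv_l; lra.
Qed.

Lemma ex_series_eps_nu : ex_series eps.
Proof.
  destruct eps_nu_geometric as [C [rho [Hrho Hbound]]].
  apply (ex_series_le (K := R_AbsRing) (V := R_CompleteNormedModule)) with (fun k => C * rho ^ k).
  - intros k. change (Rabs (eps k) <= C * rho ^ k).
    rewrite Rabs_pos_eq by apply eps_nu_nonneg. apply Hbound.
  - apply (ex_series_scal_l (K := R_AbsRing) (V := R_NormedModule) C). apply ex_series_geom.
    rewrite Rabs_pos_eq; lra.
Qed.

End Eps.

Lemma is_derive_Rconst (a x : R) : is_derive (fun _ => a) x 0.
Proof. apply (is_derive_const (K := R_AbsRing) (V := R_NormedModule)). Qed.

Lemma is_derive_Rplus (f g : R -> R) x df dg : is_derive f x df -> is_derive g x dg ->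
  is_derive (fun y => f y + g y) x (df + dg).
Proof. apply (is_derive_plus (K := R_AbsRing) (V := R_NormedModule)). Qed.

Lemma is_derive_Rmult (f g : R -> R) x df dg : is_derive f x df -> is_derive g x dg ->
  is_derive (fun y => f y * g y) x (df * g x + f x * dg).
Proof. intros Hf Hg. apply (is_derive_mult (K := R_AbsRing)); auto. intros; apply Rmult_comm. Qed.

Lemma is_derive_Rcomp (f g : R -> R) x df dg : is_derive f (g x) df -> is_derive g x dg ->
  is_derive (fun y => f (g y)) x (dg * df).
Proof. apply (is_derive_comp (K := R_AbsRing) (V := R_NormedModule)). Qed.

Lemma is_derive_Req (f : R -> R) x l l' : is_derive f x l -> is_derive f x l' -> l = l'.
Proof. intros H H'. rewrite <- (is_derive_unique _ _ _ H). exact (is_derive_unique _ _ _ H'). Qed.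

Lemma is_derive_abs_le (f : R -> R) x l (S : R -> Prop) K : is_derive f x l -> locally x S ->
  (forall y, S y -> y <> x -> Rabs (f y - f x) / Rabs (y - x) <= K) -> Rabs l <= K.
Proof.
  intros Hd [e He] HK. apply is_derive_Reals in Hd.
  apply Rnot_lt_le. intros Hlt.
  destruct (Hd (Rabs l - K)) as [dl Hdl]; [lra |].
  pose proof (cond_pos dl). pose proof (cond_pos e).
  set (h := Rmin (dl / 2) (e / 2)).
  assert (Hh : 0 < h) by (apply Rmin_pos; lra).
  assert (Hhdl : h < dl) by (pose proof (Rmin_l (dl / 2) (e / 2)); unfold h; lra).
  assert (Hhe : h < e) by (pose proof (Rmin_r (dl / 2) (e / 2)); unfold h; lra).
  assert (Hhabs : Rabs h = h) by (apply Rabs_pos_eq; lra).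
  specialize (Hdl h (Rgt_not_eq _ _ Hh) ltac:(rewrite Hhabs; exact Hhdl)).
  assert (HS : S (x + h)).
  { apply He. change (Rabs (x + h - x) < e). replace (x + h - x) with h by ring. lra. }
  specialize (HK (x + h) HS ltac:(lra)). replace (x + h - x) with h in HK by ring.
  rewrite Hhabs in HK.
  assert (Hslope : Rabs ((f (x + h) - f x) / h) <= K)
    by (unfold Rdiv in *; rewrite Rabs_mult, Rabs_inv, Hhabs; exact HK).
  pose proof (Rabs_triang_inv l ((f (x + h) - f x) / h)).
  rewrite <- Rabs_Ropp in Hdl.
  replace (- ((f (x + h) - f x) / h - l)) with (l - (f (x + h) - f x) / h) in Hdl by ring.
  lra.
Qed.

Definition lsum (l : list nat) (F : nat -> R) : R := fold_right Rplus 0 (map F l).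

Section ListSum.
Variable l : list nat.

Lemma lsum_ext F G : (forall j, In j l -> F j = G j) -> lsum l F = lsum l G.
Proof.
  unfold lsum. induction l as [|a l' IH]; intros H; [reflexivity |]. simpl.
  rewrite (H a (or_introl eq_refl)), IH; [reflexivity |]. intros; apply H; simpl; auto.
Qed.

Lemma lsum_lin F G a a' : lsum l (fun j => a * F j + a' * G j) = a * lsum l F + a' * lsum l G.
Proof. unfold lsum. induction l as [|? ? IH]; simpl; [ring |]. rewrite IH. ring. Qed.

Lemma lsum_scal F a : lsum l (fun j => a * F j) = a * lsum l F.
Proof. unfold lsum. induction l as [|? ? IH]; simpl; [ring |]. rewrite IH. ring. Qed.

Lemma lsum_le F G : (forall j, In j l -> F j <= G j) -> lsum l F <= lsum l G.
Proof.
  unfold lsum. induction l as [|a l' IH]; intros H; simpl; [lra |].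
  apply Rplus_le_compat; [apply H; simpl; auto | apply IH; intros; apply H; simpl; auto].
Qed.

Lemma lsum_abs F : Rabs (lsum l F) <= lsum l (fun j => Rabs (F j)).
Proof.
  unfold lsum. induction l as [|? ? IH]; simpl; [rewrite Rabs_R0; lra |].
  eapply Rle_trans; [apply Rabs_triang | lra].
Qed.

Lemma is_derive_lsum (F : nat -> R -> R) dF x : (forall j, In j l -> is_derive (F j) x (dF j)) ->
  is_derive (fun y => lsum l (fun j => F j y)) x (lsum l dF).
Proof.
  unfold lsum. induction l as [|a l' IH]; intros H; simpl; [apply is_derive_Rconst |].
  apply (is_derive_Rplus (F a)); [apply H; simpl; auto | apply IH; intros; apply H; simpl; auto].
Qed.

End ListSum.

Lemma in_seq_lt N j : In j (seq 0 N) -> (j < N)%nat.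
Proof. intros H. apply in_seq in H. lia. Qed.

Section WordSum.
Variable N : nat.

Fixpoint sum_words (k : nat) (g : list nat -> R) : R :=
  match k with
  | O => g []
  | S k => lsum (seq 0 N) (fun j => sum_words k (fun w => g (j :: w)))
  end.

Lemma sum_words_ext k : forall g h, (forall w, word N k w -> g w = h w) ->
  sum_words k g = sum_words k h.
Proof.
  induction k as [|k IH]; intros g h H; simpl; [apply H; split; auto |].
  apply lsum_ext. intros j Hj. apply IH. intros w Hw. apply H, word_cons; [apply in_seq_lt |]; auto.
Qed.

Lemma sum_words_lin k : forall F G a a',
  sum_words k (fun w => a * F w + a' * G w) = a * sum_words k F + a' * sum_words k G.
Proof.
  induction k as [|k IH]; intros F G a a'; simpl; [reflexivity |].
  rewrite <- lsum_lin. apply lsum_ext. intros j _. apply IH.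
Qed.

Lemma sum_words_scal k F a : sum_words k (fun w => a * F w) = a * sum_words k F.
Proof.
  transitivity (sum_words k (fun w => a * F w + 0 * F w)).
  - apply sum_words_ext. intros; ring.
  - rewrite sum_words_lin. ring.
Qed.

Lemma sum_words_le k : forall F G, (forall w, word N k w -> F w <= G w) ->
  sum_words k F <= sum_words k G.
Proof.
  induction k as [|k IH]; intros F G H; simpl; [apply H; split; auto |].
  apply lsum_le. intros j Hj. apply IH. intros w Hw. apply H, word_cons; [apply in_seq_lt |]; auto.
Qed.

Lemma sum_words_abs k : forall F, Rabs (sum_words k F) <= sum_words k (fun w => Rabs (F w)).
Proof.
  induction k as [|k IH]; intros F; simpl; [lra |].
  eapply Rle_trans; [apply lsum_abs | apply lsum_le; intros j _; apply IH].
Qed.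

End WordSum.

Fixpoint sum_lt (u : nat -> R) (k : nat) : R :=
  match k with O => 0 | S k => sum_lt u k + u k end.

Lemma sum_lt_S u k : sum_lt u (S k) = sum_n u k.
Proof.
  induction k as [|k IH]; [simpl; rewrite sum_O; ring |].
  change (sum_lt u (S k) + u (S k) = sum_n u (S k)). rewrite IH, sum_Sn. reflexivity.
Qed.

Lemma sum_lt_nonneg u k : (forall i, 0 <= u i) -> 0 <= sum_lt u k.
Proof. intros Hu. induction k as [|k IH]; simpl; [lra |]. specialize (Hu k). lra. Qed.

Lemma is_lim_seq_sum_lt u l : is_lim_seq (sum_n u) l -> is_lim_seq (sum_lt u) l.
Proof.
  intros H. apply is_lim_seq_incr_1. apply is_lim_seq_ext with (sum_n u); [| exact H].
  intros k. symmetry. apply sum_lt_S.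
Qed.

Lemma iterate_term_abs_le s p g V t D G T K : 0 <= s -> 0 < p -> 0 < V ->
  Rabs g <= G -> Rabs t <= T -> Rabs D <= K * V ->
  Rabs (s * p * g * V + p * t * D) <= (s * G + T * K) * (p * V).
Proof.
  intros Hs Hp HV Hg Ht HD.
  eapply Rle_trans; [apply Rabs_triang |]. rewrite !Rabs_mult.
  rewrite (Rabs_pos_eq s), (Rabs_pos_eq p), (Rabs_pos_eq V) by lra.
  assert (Rabs t * Rabs D <= T * (K * V)) by (apply Rmult_le_compat; auto; apply Rabs_pos).
  assert (s * p * V * Rabs g <= s * p * V * G)
    by (apply Rmult_le_compat_l; [apply Rmult_le_pos; [apply Rmult_le_pos |] |]; lra).
  assert (p * (Rabs t * Rabs D) <= p * (T * (K * V))) by (apply Rmult_le_compat_l; lra).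
  nra.
Qed.

Lemma iterate_term_sign_le sg s p g V t D T K : Rabs sg = 1 -> sg * g <= 0 ->
  0 <= s -> 0 < p -> 0 < V -> Rabs t <= T -> Rabs D <= K * V ->
  sg * (s * p * g * V + p * t * D) <= T * K * (p * V).
Proof.
  intros Hsg Hg Hs Hp HV Ht HD.
  assert (s * p * V * (sg * g) <= 0)
    by (assert (0 <= s * p * V) by (apply Rmult_le_pos; [apply Rmult_le_pos |]; lra); nra).
  assert (sg * t * D <= Rabs t * Rabs D)
    by (eapply Rle_trans; [apply Rle_abs | rewrite !Rabs_mult, Hsg; lra]).
  assert (Rabs t * Rabs D <= T * (K * V)) by (apply Rmult_le_compat; auto; apply Rabs_pos).
  assert (p * (sg * t * D) <= p * (T * (K * V))) by (apply Rmult_le_compat_l; lra).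
  nra.
Qed.

Lemma Rpower_1_l y : Rpower 1 y = 1.
Proof. unfold Rpower. rewrite ln_1, Rmult_0_r. apply exp_0. Qed.

Lemma is_derive_Rpower_l (f : R -> R) x df s : 0 < f x -> is_derive f x df ->
  is_derive (fun y => Rpower (f y) s) x (s * Rpower (f x) s * (df / f x)).
Proof.
  intros Hfx Hf.
  replace (s * Rpower (f x) s * (df / f x)) with (df * (s * Rpower (f x) (s - 1))).
  - apply (is_derive_Rcomp (fun u => Rpower u s) f); [| exact Hf].
    apply is_derive_Reals, derivable_pt_lim_power, Hfx.
  - unfold Rminus. rewrite Rpower_plus, Rpower_Ropp, Rpower_1 by exact Hfx. field. lra.
Qed.

Lemma interval_lipschitz (f f' : R -> R) a b K x y :
  (forall z, a < z < b -> is_derive f z (f' z)) -> (forall z, a < z < b -> Rabs (f' z) <= K) ->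
  a < x < b -> a < y < b -> Rabs (f x - f y) <= K * Rabs (x - y).
Proof.
  intros Hder Hbnd Hx Hy.
  assert (Hseg : forall z, Rmin x y <= z <= Rmax x y -> a < z < b)
    by (intros z; unfold Rmin, Rmax; destruct Rle_dec; lra).
  destruct (MVT_gen f x y f') as [z [Hz Heq]].
  - intros z Hz. apply Hder, Hseg. lra.
  - intros z Hz. apply continuity_pt_filterlim.
    apply (ex_derive_continuous (K := R_AbsRing) (V := R_NormedModule)).
    exists (f' z). apply Hder, Hseg, Hz.
  - rewrite <- Rabs_Ropp, Ropp_minus_distr, Heq, Rabs_mult, <- (Rabs_Ropp (y - x)), Ropp_minus_distr.
    apply Rmult_le_compat_r; [apply Rabs_pos | apply Hbnd, Hseg, Hz].
Qed.

Lemma abs_sub_le_of_far a a' B g t : Rabs a <= B -> Rabs a' <= B -> 0 < g -> g <= t ->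
  Rabs (a - a') <= 2 * B / g * t.
Proof.
  intros Ha Ha' Hg Ht.
  assert (Rabs (a - a') <= 2 * B)
    by (unfold Rminus; eapply Rle_trans; [apply Rabs_triang | rewrite Rabs_Ropp; lra]).
  assert (0 <= B) by (pose proof (Rabs_pos a); lra).
  assert (1 <= t / g)
    by (apply Rmult_le_reg_r with g; [lra | unfold Rdiv; rewrite Rmult_assoc, Rinv_l; lra]).
  replace (2 * B / g * t) with (2 * B * (t / g)) by (field; lra).
  nra.
Qed.

Definition C1_bar (n : nat) (c d : nat -> R) (f f' : R -> R) : Prop :=
  cont_on (barHset n c d) f /\ cont_on (barHset n c d) f' /\
  forall x, Hset n c d x -> is_derive f x (f' x).

Lemma Cm_bar_C1_bar n c d m f : (1 <= m)%nat -> Cm_bar n c d m f -> exists f', C1_bar n c d f f'.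
Proof.
  intros Hm [F [HF0 [HFcont HFder]]]. exists (F 1%nat). split; [| split].
  - apply cont_on_ext with (F O); [apply HFcont; lia | exact HF0].
  - apply HFcont, Hm.
  - intros x Hx. apply is_derive_ext_loc with (F O); [| apply HFder; [lia | exact Hx]].
    apply (filter_imp (Hset n c d)); [| exact (Hset_locally n c d x Hx)].
    intros y Hy. apply HF0, Hset_barHset, Hy.
Qed.

(** * Derivatives along words and the eigenfunction *)

Section Dynamics.
Variables (n : nat) (c d : nat -> R).
Hypothesis Hcd : forall j, (j < n)%nat -> c j < d j.
Hypothesis Hdisj : forall i j, (i < n)%nat -> (j < n)%nat -> i <> j -> d i < c j \/ d j < c i.
Notation HH := (Hset n c d).
Notation BH := (barHset n c d).
Variables (N : nat) (b th b' th' : nat -> R -> R).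
Hypothesis Hb : forall j, (j < N)%nat -> C1_bar n c d (b j) (b' j).
Hypothesis Hth : forall j, (j < N)%nat -> C1_bar n c d (th j) (th' j).
Let Hb_cont j (Hj : (j < N)%nat) : cont_on BH (b j) := proj1 (Hb j Hj).
Let Hb'_cont j (Hj : (j < N)%nat) : cont_on BH (b' j) := proj1 (proj2 (Hb j Hj)).
Let Hb_der j x (Hj : (j < N)%nat) : HH x -> is_derive (b j) x (b' j x) :=
  proj2 (proj2 (Hb j Hj)) x.
Let Hth_cont j (Hj : (j < N)%nat) : cont_on BH (th j) := proj1 (Hth j Hj).
Let Hth'_cont j (Hj : (j < N)%nat) : cont_on BH (th' j) := proj1 (proj2 (Hth j Hj)).
Let Hth_der j x (Hj : (j < N)%nat) : HH x -> is_derive (th j) x (th' j x) :=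
  proj2 (proj2 (Hth j Hj)) x.
Hypothesis Hb_pos : forall j x, (j < N)%nat -> BH x -> 0 < b j x.
Hypothesis Hth_H : forall j x, (j < N)%nat -> HH x -> HH (th j x).
Notation eps := (eps_nu n c d N th).
Notation C1 := (C1const n c d N b).

Lemma theta_barHset j x : (j < N)%nat -> BH x -> BH (th j x).
Proof.
  intros Hj. apply (cont_on_barHset_maps n c d Hcd); [exact (Hth_cont j Hj) |].
  intros y. apply Hth_H, Hj.
Qed.

(* Within a component use the mean value theorem; across components the gap between them
   and the boundedness of H bound the slope. *)
Lemma theta_lipschitz : exists L, 0 <= L /\ forall j x y, (j < N)%nat -> HH x -> HH y ->
  Rabs (th j x - th j y) <= L * Rabs (x - y).
Proof.
  destruct (barHset_bounded n c d) as [B HB].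
  destruct (Hset_close_same_component n c d Hdisj) as [g [Hg Hclose]].
  destruct (ex_ub_forall_lt N (fun j L => forall x y, HH x -> HH y ->
     Rabs (th j x - th j y) <= L * Rabs (x - y))) as [L HL].
  - intros j L L' HLL' HL x y Hx Hy.
    specialize (HL x y Hx Hy). pose proof (Rabs_pos (x - y)). nra.
  - intros j Hj. destruct (cont_on_barHset_bounded n c d Hcd _ (Hth'_cont j Hj)) as [K HK].
    assert (HthB : forall x, HH x -> Rabs (th j x) <= Rmax B 0).
    { intros x Hx. eapply Rle_trans; [apply HB, Hset_barHset, Hth_H, Hx; exact Hj | apply Rmax_l]. }
    assert (0 <= 2 * Rmax B 0 / g) by (apply Rle_mult_inv_pos; [pose proof (Rmax_r B 0); lra | exact Hg]).
    pose proof (Rmax_l K 0). pose proof (Rmax_r K 0).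
    exists (Rmax K 0 + 2 * Rmax B 0 / g). intros x y Hx Hy. pose proof (Rabs_pos (x - y)).
    destruct (Rlt_dec (Rabs (x - y)) g) as [Hlt | Hge].
    + destruct (Hclose x y Hx Hy Hlt) as [i [Hi [Hxi Hyi]]].
      assert (Hcomp : forall z, c i < z < d i -> HH z) by (intros z Hz; exists i; auto).
      apply Rle_trans with (Rmax K 0 * Rabs (x - y)); [| apply Rmult_le_compat_r; lra].
      apply (interval_lipschitz (th j) (th' j) (c i) (d i)); [| | exact Hxi | exact Hyi].
      * intros z Hz. apply Hth_der, Hcomp; assumption.
      * intros z Hz. eapply Rle_trans; [apply HK, Hset_barHset, Hcomp, Hz | lra].
    + apply Rle_trans with (2 * Rmax B 0 / g * Rabs (x - y)); [| apply Rmult_le_compat_r; lra].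
      apply abs_sub_le_of_far; [apply HthB, Hx | apply HthB, Hy | exact Hg | lra].
  - exists (Rmax L 0). split; [apply Rmax_r |]. intros j x y Hj Hx Hy.
    eapply Rle_trans; [exact (HL j Hj x y Hx Hy) |].
    apply Rmult_le_compat_r; [apply Rabs_pos | apply Rmax_l].
Qed.

Definition dlog_b (j : nat) (x : R) : R := b' j x / b j x.

Fixpoint dlog_b_w (w : list nat) (x : R) : R :=
  match w with [] => 0 | j :: w' => dlog_b j x + th' j x * dlog_b_w w' (th j x) end.

Fixpoint dtheta_w (w : list nat) (x : R) : R :=
  match w with [] => 1 | j :: w' => th' j x * dtheta_w w' (th j x) end.

Lemma b_w_pos w : forall k x, word N k w -> BH x -> 0 < b_w b th w x.
Proof.
  induction w as [|j w IH]; intros k x Hw Hx; simpl; [lra |].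
  apply word_cons_inv in Hw as [Hj Hw].
  apply Rmult_lt_0_compat; [apply Hb_pos | apply (IH _ _ Hw), theta_barHset]; assumption.
Qed.

Lemma is_derive_theta_w w : forall k x, word N k w -> HH x ->
  is_derive (theta_w th w) x (dtheta_w w x).
Proof.
  induction w as [|j w IH]; intros k x Hw Hx; simpl.
  - apply (is_derive_id (K := R_AbsRing)).
  - apply word_cons_inv in Hw as [Hj Hw].
    apply (is_derive_Rcomp (theta_w th w) (th j)); [apply (IH _ _ Hw), Hth_H | apply Hth_der]; auto.
Qed.

Lemma is_derive_b_w w : forall k x, word N k w -> HH x ->
  is_derive (b_w b th w) x (dlog_b_w w x * b_w b th w x).
Proof.
  induction w as [|j w IH]; intros k x Hw Hx; simpl.
  - rewrite Rmult_0_l. apply is_derive_Rconst.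
  - apply word_cons_inv in Hw as [Hj Hw].
    assert (Hbx : 0 < b j x) by (apply Hb_pos, Hset_barHset; assumption).
    replace ((dlog_b j x + th' j x * dlog_b_w w (th j x)) * (b j x * b_w b th w (th j x))) with
      (b' j x * b_w b th w (th j x) + b j x * (th' j x * (dlog_b_w w (th j x) * b_w b th w (th j x))))
      by (unfold dlog_b; field; lra).
    apply (is_derive_Rmult (b j) (fun y => b_w b th w (th j y))); [apply Hb_der; assumption |].
    apply (is_derive_Rcomp (b_w b th w) (th j)); [apply (IH _ _ Hw), Hth_H | apply Hth_der]; auto.
Qed.

Lemma cont_on_b_w w : forall k, word N k w -> cont_on BH (b_w b th w).
Proof.
  induction w as [|j w IH]; intros k Hw; simpl; [apply cont_on_const |].
  apply word_cons_inv in Hw as [Hj Hw].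
  apply cont_on_mult; [exact (Hb_cont j Hj) |].
  apply cont_on_comp; [exact (IH _ Hw) | exact (Hth_cont j Hj) |].
  intros x. apply theta_barHset, Hj.
Qed.

Lemma cont_on_dlog_b_w w : forall k, word N k w -> cont_on BH (dlog_b_w w).
Proof.
  induction w as [|j w IH]; intros k Hw; simpl; [apply cont_on_const |].
  apply word_cons_inv in Hw as [Hj Hw].
  apply cont_on_plus.
  - apply cont_on_mult; [exact (Hb'_cont j Hj) |]. apply cont_on_inv; [exact (Hb_cont j Hj) |].
    intros x Hx. apply Rgt_not_eq, Hb_pos; assumption.
  - apply cont_on_mult; [exact (Hth'_cont j Hj) |].
    apply cont_on_comp; [exact (IH _ Hw) | exact (Hth_cont j Hj) |].
    intros x. apply theta_barHset, Hj.
Qed.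

Lemma dlog_b_w_rcons w j x :
  dlog_b_w (w ++ [j]) x = dlog_b_w w x + dlog_b j (theta_w th w x) * dtheta_w w x.
Proof.
  revert x. induction w as [|i w IH]; intros x; simpl; [ring |].
  rewrite IH. change (theta_w th (i :: w) x) with (theta_w th w (th i x)). ring.
Qed.

Lemma dtheta_w_abs_le w k x : word N k w -> HH x -> Rabs (dtheta_w w x) <= eps k.
Proof.
  intros Hw Hx. destruct k as [|k].
  - destruct Hw as [Hl _]. destruct w; [| discriminate]. simpl. rewrite Rabs_R1. lra.
  - apply (is_derive_abs_le (theta_w th w) x _ HH); [exact (is_derive_theta_w _ _ _ Hw Hx) |
      exact (Hset_locally n c d x Hx) |].
    intros y Hy Hne. apply (le_eps_nu n c d N th Hth_H theta_lipschitz).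
    exists w, y, x. auto 10.
Qed.

Lemma dlog_b_bounded : exists B, forall j x, (j < N)%nat -> HH x -> Rabs (b' j x) / b j x <= B.
Proof.
  destruct (ex_ub_forall_lt N (fun j B => forall x, HH x -> Rabs (b' j x) / b j x <= B))
    as [B HB]; [intros j B B' HBB' H x Hx; specialize (H x Hx); lra | | exists B; auto].
  intros j Hj.
  destruct (cont_on_barHset_bounded n c d Hcd _ (Hb'_cont j Hj)) as [K1 HK1].
  destruct (cont_on_barHset_bounded n c d Hcd (fun x => / b j x)) as [K2 HK2].
  { apply cont_on_inv; [exact (Hb_cont j Hj) |]. intros x Hx. apply Rgt_not_eq, Hb_pos; assumption. }
  exists (K1 * K2). intros x Hx. apply Hset_barHset in Hx.
  assert (Hbx : 0 < b j x) by (apply Hb_pos; assumption).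
  specialize (HK2 x Hx). rewrite Rabs_pos_eq in HK2 by (apply Rlt_le, Rinv_0_lt_compat, Hbx).
  apply Rmult_le_compat; [apply Rabs_pos | apply Rlt_le, Rinv_0_lt_compat, Hbx | auto | exact HK2].
Qed.

Lemma C1const_nonneg : 0 <= C1.
Proof.
  apply real_Lub_Rbar_nonneg. intros r [j [x [Hj [Hx ->]]]].
  apply Rle_mult_inv_pos; [apply Rabs_pos | apply Hb_pos, Hset_barHset; assumption].
Qed.

Lemma dlog_b_abs_le j x : (j < N)%nat -> HH x -> Rabs (dlog_b j x) <= C1.
Proof.
  intros Hj Hx. destruct dlog_b_bounded as [B HB].
  assert (Hbx : 0 < b j x) by (apply Hb_pos, Hset_barHset; assumption).
  apply (le_real_Lub_Rbar _ B).
  - intros r [i [y [Hi [Hy ->]]]]. rewrite (is_derive_unique _ _ _ (Hb_der i y Hi Hy)). auto.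
  - exists j, x. split; [exact Hj | split; [exact Hx |]].
    rewrite (is_derive_unique _ _ _ (Hb_der j x Hj Hx)).
    unfold dlog_b, Rdiv. rewrite Rabs_mult, Rabs_inv, (Rabs_pos_eq (b j x)); lra.
Qed.

Lemma dlog_b_w_abs_le w : forall k x, word N k w -> HH x ->
  Rabs (dlog_b_w w x) <= C1 * sum_lt eps k.
Proof.
  induction w as [|j w IH] using rev_ind; intros k x Hw Hx.
  - simpl. rewrite Rabs_R0.
    apply Rmult_le_pos; [apply C1const_nonneg | apply sum_lt_nonneg, eps_nu_nonneg].
  - destruct Hw as [Hl Hf]. rewrite length_app in Hl. simpl in Hl. subst k.
    apply Forall_app in Hf as [Hf Hj]. inversion Hj as [| ? ? Hjlt]; subst.
    assert (Hw : word N (length w) w) by (split; auto).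
    rewrite Nat.add_1_r. simpl sum_lt. rewrite dlog_b_w_rcons.
    pose proof (IH _ x Hw Hx).
    pose proof (dlog_b_abs_le j _ Hjlt (theta_w_Hset n c d N th Hth_H w _ x Hw Hx)).
    pose proof (dtheta_w_abs_le w _ x Hw Hx).
    pose proof C1const_nonneg. pose proof (Rabs_pos (dtheta_w w x)).
    pose proof (Rabs_pos (dlog_b j (theta_w th w x))).
    eapply Rle_trans; [apply Rabs_triang |]. rewrite Rabs_mult. nra.
Qed.


Lemma dlog_b_w_sign (delta : nat) k w : word N k w ->
  (forall Db, Dext n c d (b_w b th w) Db -> forall x, BH x -> (-1) ^ delta * Db x / b_w b th w x <= 0) ->
  forall x, HH x -> (-1) ^ delta * dlog_b_w w x <= 0.
Proof.
  intros Hw Hsign x Hx.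
  assert (HD : Dext n c d (b_w b th w) (fun y => dlog_b_w w y * b_w b th w y)).
  { split.
    - apply cont_on_mult; [exact (cont_on_dlog_b_w w k Hw) | exact (cont_on_b_w w k Hw)].
    - intros y Hy. exact (is_derive_b_w w k y Hw Hy). }
  pose proof (b_w_pos w k x Hw (Hset_barHset _ _ _ _ Hx)).
  specialize (Hsign _ HD x (Hset_barHset _ _ _ _ Hx)). cbv beta in Hsign.
  replace ((-1) ^ delta * (dlog_b_w w x * b_w b th w x) / b_w b th w x)
    with ((-1) ^ delta * dlog_b_w w x) in Hsign by (field; lra).
  exact Hsign.
Qed.

Section Eigenfunction.
Variables (s lam : R) (v Dv : R -> R).
Hypothesis Hs : 0 < s.
Hypothesis Hlam : 0 < lam.
Hypothesis Hv_pos : forall x, BH x -> 0 < v x.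
Hypothesis Hv_eig : forall x, BH x -> Ls N b th s v x = lam * v x.
Hypothesis HDv : Dext n c d v Dv.

Definition weight (w : list nat) (x : R) : R := Rpower (b_w b th w x) s.

Lemma weight_pos w x : 0 < weight w x.
Proof. apply exp_pos. Qed.

Lemma weight_cons j w k x : (j < N)%nat -> word N k w -> BH x ->
  weight (j :: w) x = Rpower (b j x) s * weight w (th j x).
Proof.
  intros Hj Hw Hx. symmetry. apply Rpower_mult_distr; [apply Hb_pos; assumption |].
  apply (b_w_pos w k); [exact Hw | apply theta_barHset; assumption].
Qed.

Lemma eigen_iterate k : forall x, HH x ->
  lam ^ k * v x = sum_words N k (fun w => weight w x * v (theta_w th w x)).
Proof.
  induction k as [|k IH]; intros x Hx.
  - unfold weight. simpl. rewrite Rpower_1_l. ring.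
  - simpl sum_words.
    transitivity (lsum (seq 0 N) (fun j => lam ^ k * (Rpower (b j x) s * v (th j x)))).
    + rewrite lsum_scal. change (lsum (seq 0 N) _) with (Ls N b th s v x).
      rewrite Hv_eig by (apply Hset_barHset; exact Hx). simpl. ring.
    + apply lsum_ext. intros j Hj. apply in_seq_lt in Hj.
      rewrite Rmult_comm, Rmult_assoc, (Rmult_comm (v _)), IH by (apply Hth_H; assumption).
      rewrite <- sum_words_scal. apply sum_words_ext. intros w Hw.
      rewrite (weight_cons j w k x Hj Hw (Hset_barHset _ _ _ _ Hx)). simpl theta_w. ring.
Qed.

Lemma eigen_derive x : HH x -> lam * Dv x = lsum (seq 0 N) (fun j =>
  s * Rpower (b j x) s * dlog_b j x * v (th j x) + Rpower (b j x) s * th' j x * Dv (th j x)).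
Proof.
  intros Hx.
  apply (is_derive_Req (fun y => lsum (seq 0 N) (fun j => Rpower (b j y) s * v (th j y))) x).
  - apply is_derive_ext_loc with (fun y => lam * v y).
    + apply (filter_imp HH); [| exact (Hset_locally n c d x Hx)].
      intros y Hy. symmetry. apply Hv_eig, Hset_barHset, Hy.
    + apply is_derive_scal, (proj2 HDv), Hx.
  - apply (is_derive_lsum _ (fun j y => Rpower (b j y) s * v (th j y))).
    intros j Hj. apply in_seq_lt in Hj.
    replace (s * Rpower (b j x) s * dlog_b j x * v (th j x) + Rpower (b j x) s * th' j x * Dv (th j x))
      with (s * Rpower (b j x) s * dlog_b j x * v (th j x) + Rpower (b j x) s * (th' j x * Dv (th j x)))
      by ring.
    apply (is_derive_Rmult (fun y => Rpower (b j y) s) (fun y => v (th j y))).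
    + apply is_derive_Rpower_l; [apply Hb_pos, Hset_barHset | apply Hb_der]; assumption.
    + apply (is_derive_Rcomp v (th j)); [apply (proj2 HDv), Hth_H | apply Hth_der]; assumption.
Qed.

Lemma eigen_derive_iterate k : forall x, HH x -> lam ^ k * Dv x = sum_words N k (fun w =>
  s * weight w x * dlog_b_w w x * v (theta_w th w x) + weight w x * dtheta_w w x * Dv (theta_w th w x)).
Proof.
  induction k as [|k IH]; intros x Hx.
  - unfold weight. simpl. rewrite Rpower_1_l. ring.
  - simpl sum_words. rewrite <- tech_pow_Rmult, (Rmult_comm lam), Rmult_assoc, eigen_derive by exact Hx.
    rewrite <- lsum_scal. apply lsum_ext. intros j Hj. apply in_seq_lt in Hj.
    assert (Hy : HH (th j x)) by (apply Hth_H; assumption).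
    set (y := th j x). set (P := Rpower (b j x) s).
    replace (lam ^ k * (s * P * dlog_b j x * v y + P * th' j x * Dv y)) with
      (s * P * dlog_b j x * (lam ^ k * v y) + P * th' j x * (lam ^ k * Dv y)) by ring.
    rewrite eigen_iterate, IH by exact Hy. rewrite <- sum_words_lin.
    apply sum_words_ext. intros w Hw.
    rewrite (weight_cons j w k x Hj Hw (Hset_barHset _ _ _ _ Hx)). fold P y. simpl. fold y. ring.
Qed.

Lemma Dv_abs_le_iterate k K x : (forall y, BH y -> Rabs (Dv y) <= K * v y) -> HH x ->
  Rabs (Dv x) <= (s * C1 * sum_lt eps k + eps k * K) * v x.
Proof.
  intros HK Hx. assert (Hlk : 0 < lam ^ k) by (apply pow_lt, Hlam).
  apply Rmult_le_reg_l with (lam ^ k); [exact Hlk |].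
  rewrite <- (Rabs_pos_eq (lam ^ k)) at 1 by lra.
  set (B := s * C1 * sum_lt eps k + eps k * K).
  replace (lam ^ k * (B * v x)) with (B * (lam ^ k * v x)) by ring.
  rewrite <- Rabs_mult, eigen_derive_iterate, eigen_iterate, <- sum_words_scal by exact Hx.
  eapply Rle_trans; [apply sum_words_abs | apply sum_words_le]. intros w Hw.
  assert (HT : HH (theta_w th w x)) by exact (theta_w_Hset n c d N th Hth_H w k x Hw Hx).
  unfold B. rewrite (Rmult_assoc s C1).
  apply iterate_term_abs_le.
  - lra.
  - apply weight_pos.
  - apply Hv_pos, Hset_barHset, HT.
  - apply (dlog_b_w_abs_le w k x Hw Hx).
  - apply (dtheta_w_abs_le w k x Hw Hx).
  - apply HK, Hset_barHset, HT.
Qed.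

Lemma Dv_sign_le_iterate (delta : nat) k K x : (delta <= 1)%nat ->
  (forall w y, word N k w -> HH y -> (-1) ^ delta * dlog_b_w w y <= 0) ->
  (forall y, BH y -> Rabs (Dv y) <= K * v y) -> HH x ->
  (-1) ^ delta * Dv x <= eps k * K * v x.
Proof.
  intros Hdelta Hsign HK Hx. assert (Hlk : 0 < lam ^ k) by (apply pow_lt, Hlam).
  apply Rmult_le_reg_l with (lam ^ k); [exact Hlk |].
  replace (lam ^ k * ((-1) ^ delta * Dv x)) with ((-1) ^ delta * (lam ^ k * Dv x)) by ring.
  replace (lam ^ k * (eps k * K * v x)) with (eps k * K * (lam ^ k * v x)) by ring.
  rewrite eigen_derive_iterate, eigen_iterate, <- !sum_words_scal by exact Hx.
  apply sum_words_le. intros w Hw.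
  assert (HT : HH (theta_w th w x)) by exact (theta_w_Hset n c d N th Hth_H w k x Hw Hx).
  apply iterate_term_sign_le.
  - destruct delta as [|[|]]; [| | lia]; simpl; unfold Rabs; destruct Rcase_abs; lra.
  - apply Hsign; assumption.
  - lra.
  - apply weight_pos.
  - apply Hv_pos, Hset_barHset, HT.
  - apply (dtheta_w_abs_le w k x Hw Hx).
  - apply HK, Hset_barHset, HT.
Qed.

Hypothesis Hv_cont : cont_on BH v.

Lemma Dv_abs_le_mul_v : exists K, forall y, BH y -> Rabs (Dv y) <= K * v y.
Proof.
  destruct (cont_on_barHset_bounded n c d Hcd (fun y => Dv y * / v y)) as [K HK].
  { apply cont_on_mult; [exact (proj1 HDv) |]. apply cont_on_inv; [exact Hv_cont |].
    intros y Hy. apply Rgt_not_eq, Hv_pos, Hy. }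
  exists K. intros y Hy. specialize (HK y Hy). pose proof (Hv_pos y Hy).
  rewrite Rabs_mult, Rabs_inv, (Rabs_pos_eq (v y)) in HK by lra.
  apply Rmult_le_reg_r with (/ v y); [apply Rinv_0_lt_compat; lra |].
  rewrite Rmult_assoc, Rinv_r; lra.
Qed.

Variables (mu : nat) (kappa : R).
Hypothesis Hmu : (1 <= mu)%nat.
Hypothesis Hkappa : kappa < 1.
Hypothesis Hcontr : forall w x y, word N mu w -> BH x -> BH y ->
  Rabs (theta_w th w x - theta_w th w y) <= kappa * Rabs (x - y).

Lemma is_lim_seq_eps_nu_0 : is_lim_seq eps 0.
Proof.
  apply ex_series_lim_0.
  exact (ex_series_eps_nu n c d N th Hth_H (theta_lipschitz) mu kappa Hmu Hkappa Hcontr).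
Qed.

Lemma Dv_abs_le_sum_eps (S : R) : is_lim_seq (sum_n eps) S ->
  forall x, BH x -> Rabs (Dv x) <= C1 * s * S * v x.
Proof.
  intros HS. destruct Dv_abs_le_mul_v as [K HK].
  assert (HH_bound : forall x, HH x -> Rabs (Dv x) <= C1 * s * S * v x).
  { intros x Hx. assert (Hvx : 0 < v x) by (apply Hv_pos, Hset_barHset, Hx).
    assert (Hlim : is_lim_seq (fun k => (s * C1 * sum_lt eps k + eps k * K) * v x)
                     ((s * C1 * S + 0 * K) * v x)).
    { apply (is_lim_seq_scal_r _ (v x) (s * C1 * S + 0 * K)), (is_lim_seq_plus' _ _ (s * C1 * S)).
      - apply (is_lim_seq_scal_l _ (s * C1) S), is_lim_seq_sum_lt, HS.
      - apply (is_lim_seq_scal_r _ K 0), is_lim_seq_eps_nu_0. }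
    pose proof (is_lim_seq_le (fun _ => Rabs (Dv x)) _ _ _
      (fun k => Dv_abs_le_iterate k K x HK Hx) (is_lim_seq_const _) Hlim) as Hle.
    simpl in Hle. lra. }
  intros x Hx.
  enough (Rabs (Dv x) + - (C1 * s * S) * v x <= 0) by lra.
  revert x Hx. apply (cont_on_barHset_le_0 n c d Hcd).
  - apply cont_on_plus; [apply cont_on_abs, (proj1 HDv) |].
    apply cont_on_mult; [apply cont_on_const | exact Hv_cont].
  - intros y Hy. specialize (HH_bound y Hy). lra.
Qed.

Lemma log_derivative_bound x : BH x ->
  Rbar_le (Finite (Rabs (Dv x) / v x)) (Rbar_mult (Finite (C1 * s)) (sum_eps n c d N th)).
Proof.
  intros Hx. destruct (ex_series_eps_nu n c d N th Hth_H theta_lipschitz mu kappa Hmu Hkappa Hcontr)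
    as [S HS'].
  assert (HS : is_lim_seq (sum_n eps) S) by exact HS'.
  unfold sum_eps. rewrite (is_lim_seq_unique _ _ HS). simpl.
  pose proof (Hv_pos x Hx). apply Rmult_le_reg_r with (v x); [lra |].
  unfold Rdiv. rewrite Rmult_assoc, Rinv_l, Rmult_1_r by lra.
  exact (Dv_abs_le_sum_eps S HS x Hx).
Qed.

Lemma log_derivative_sign (delta : nat) : (delta <= 1)%nat ->
  (forall nu w, (1 <= nu)%nat -> word N nu w ->
     forall Db, Dext n c d (b_w b th w) Db ->
     forall x, BH x -> (-1) ^ delta * Db x / b_w b th w x <= 0) ->
  forall x, BH x -> (-1) ^ delta * Dv x <= 0.
Proof.
  intros Hdelta Hsign. destruct Dv_abs_le_mul_v as [K HK].
  apply (cont_on_barHset_le_0 n c d Hcd).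
  { apply cont_on_mult; [apply cont_on_const | exact (proj1 HDv)]. }
  intros x Hx. assert (Hvx : 0 < v x) by (apply Hv_pos, Hset_barHset, Hx).
  assert (Hlim : is_lim_seq (fun k => eps (S k) * K * v x) (0 * K * v x)).
  { apply (is_lim_seq_scal_r _ (v x) (0 * K)), (is_lim_seq_scal_r _ K 0).
    apply (is_lim_seq_incr_1 eps 0), is_lim_seq_eps_nu_0. }
  assert (Hle : forall k, (-1) ^ delta * Dv x <= eps (S k) * K * v x).
  { intros k. apply Dv_sign_le_iterate; auto.
    intros w y Hw. apply (dlog_b_w_sign delta (S k) w Hw), (Hsign (S k)); [lia | exact Hw]. }
  pose proof (is_lim_seq_le _ _ _ _ Hle (is_lim_seq_const _) Hlim) as H. simpl in H. lra.
Qed.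

End Eigenfunction.
End Dynamics.

Theorem theorem6p1
  (n : nat) (c d : nat -> R)
  (Hcd : forall j, (j < n)%nat -> c j < d j)
  (Hdisj : forall i j, (i < n)%nat -> (j < n)%nat -> i <> j -> d i < c j \/ d j < c i)
  (N : nat) (m : nat) (Hm : (1 <= m)%nat)
  (b th : nat -> R -> R)
  (Hb_Cm : forall beta, (beta < N)%nat -> Cm_bar n c d m (b beta))
  (Hth_Cm : forall beta, (beta < N)%nat -> Cm_bar n c d m (th beta))
  (Hb_pos : forall beta x, (beta < N)%nat -> barHset n c d x -> 0 < b beta x)
  (Hth_H : forall beta x, (beta < N)%nat -> Hset n c d x -> Hset n c d (th beta x))
  (mu : nat) (kappa : R) (Hmu : (1 <= mu)%nat) (Hkappa : kappa < 1)
  (Hcontr : forall w x y, word N mu w -> barHset n c d x -> barHset n c d y ->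
      Rabs (theta_w th w x - theta_w th w y) <= kappa * Rabs (x - y))
  (s : R) (Hs : 0 < s)
  (v : R -> R) (lam : R) (Hlam : 0 < lam)
  (Hv_Cm : Cm_bar n c d m v)
  (Hv_pos : forall x, barHset n c d x -> 0 < v x)
  (Hv_eig : forall x, barHset n c d x -> Ls N b th s v x = lam * v x) :
  (forall Dv : R -> R, Dext n c d v Dv ->
     forall x, barHset n c d x ->
       Rbar_le (Finite (Rabs (Dv x) / v x)%R)
               (Rbar_mult (Finite (C1const n c d N b * s)%R) (sum_eps n c d N th)))
  /\
  (forall delta : nat, (delta <= 1)%nat ->
     (forall nu w, (1 <= nu)%nat -> word N nu w ->
        forall Db : R -> R, Dext n c d (b_w b th w) Db ->
        forall x, barHset n c d x -> (-1) ^ delta * Db x / b_w b th w x <= 0) ->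
     forall Dv : R -> R, Dext n c d v Dv ->
     forall x, barHset n c d x -> (-1) ^ delta * Dv x <= 0).
Proof.
  destruct (choice_lt N (fun _ => 0) (fun j f' => C1_bar n c d (b j) f'))
    as [b' Hb]; [intros j Hj; exact (Cm_bar_C1_bar n c d m (b j) Hm (Hb_Cm j Hj)) |].
  destruct (choice_lt N (fun _ => 0) (fun j f' => C1_bar n c d (th j) f'))
    as [th' Hth]; [intros j Hj; exact (Cm_bar_C1_bar n c d m (th j) Hm (Hth_Cm j Hj)) |].
  destruct (Cm_bar_C1_bar n c d m v Hm Hv_Cm) as [v' [Hv_cont _]].
  split.
  - intros Dv HDv.
    exact (log_derivative_bound n c d Hcd Hdisj N b th b' th' Hb Hth Hb_pos Hth_H
             s lam v Dv Hs Hlam Hv_pos Hv_eig HDv Hv_cont mu kappa Hmu Hkappa Hcontr).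
  - intros delta Hdelta Hsign Dv HDv.
    exact (log_derivative_sign n c d Hcd Hdisj N b th b' th' Hb Hth Hb_pos Hth_H
             s lam v Dv Hs Hlam Hv_pos Hv_eig HDv Hv_cont mu kappa Hmu Hkappa Hcontr
             delta Hdelta Hsign).
Qed.
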